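(* Let $p$ be an odd prime and let $\mathcal{A}\subseteq\mathbb{F}_p$. Then \[|T_{2,2}(\mathcal{A}\times\mathcal{A})|\ge \frac{1}{6}\left(|\mathcal{A}|^2-2\right)\cdot|\Delta_{\mathbb{F}_p}(\mathcal{A}\times\mathcal{A})|,\] where $\Delta_{\mathbb{F}_p}(\mathcal{A}\times\mathcal{A})=\{\|\mathbf{x}-\mathbf{y}\|:\mathbf{x},\mathbf{y}\in\mathcal{A}\times\mathcal{A}\}$ is the set of distinct distances determined by points of $\mathcal{A}\times\mathcal{A}$.
   Context: For $\mathbf{x}=(x_1,x_2),\mathbf{y}=(y_1,y_2)\in\mathbb{F}_p^2$, $\|\mathbf{x}-\mathbf{y}\|=(x_1-y_1)^2+(x_2-y_2)^2$. For $\mathcal{E}\subseteq\mathbb{F}_p^2$, a triangle determined by $\mathcal{E}$ is a triple $(\mathbf{x}_1,\mathbf{x}_2,\mathbf{x}_3)$ of points of $\mathcal{E}$. Two triangles $(\mathbf{x}_1,\mathbf{x}_2,\mathbf{x}_3)$ and $(\mathbf{y}_1,\mathbf{y}_2,\mathbf{y}_3)$ are in the same congruence class if there exist an orthogonal $2\times2$ matrix $\theta$ over $\mathbb{F}_p$ ($\theta^T\theta=I$) and $\mathbf{z}\in\mathbb{F}_p^2$ with $\mathbf{z}+\theta\mathbf{x}_i=\mathbf{y}_i$ for $i=1,2,3$. $T_{2,2}(\mathcal{E})$ is the set of congruence classes of triangles determined by points of $\mathcal{E}$. *)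

From mathcomp Require Import all_boot all_order all_algebra.
Set Implicit Arguments. Unset Strict Implicit. Unset Printing Implicit Defensive.
Import GRing.Theory.
Local Open Scope ring_scope.

Definition pt (p : nat) := 'cV['F_p]_2.

Definition sqdist (p : nat) (x y : pt p) : 'F_p :=
  (x 0 0 - y 0 0) ^+ 2 + (x 1 0 - y 1 0) ^+ 2.

Definition grid (p : nat) (A : {set 'F_p}) : {set pt p} :=
  [set x : pt p | (x 0 0 \in A) && (x 1 0 \in A)].

Definition orthogonal (p : nat) (th : 'M['F_p]_2) : bool := th^T *m th == 1%:M.

Definition triangle (p : nat) := (pt p * pt p * pt p)%type.

Definition congruent (p : nat) (t s : triangle p) : bool :=
  [exists th : 'M['F_p]_2, exists z : pt p,
     [&& orthogonal th,
         z + th *m t.1.1 == s.1.1,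
         z + th *m t.1.2 == s.1.2 &
         z + th *m t.2 == s.2]].

Definition triangles (p : nat) (E : {set pt p}) : {set triangle p} :=
  [set t : triangle p | [&& t.1.1 \in E, t.1.2 \in E & t.2 \in E]].

Definition T22 (p : nat) (E : {set pt p}) : {set {set triangle p}} :=
  [set [set s : triangle p | congruent t s] | t in triangles E].

Definition distset (p : nat) (E : {set pt p}) : {set 'F_p} :=
  [set sqdist xy.1 xy.2 | xy in setX E E].

(* For each non-zero distance d pick x, y in E with |xy| = d.  The map sending
   (d, z), z in E, to the side lengths (d, |xz|, |yz|) of the triangle (x, y, z)
   is at most two-to-one: as 2 and d are invertible in F_p, the only points z'
   with |xz'| = |xz| and |yz'| = |yz| are z and its mirror image in the line xy.
   Congruent triangles have equal side lengths, so
   #|Delta \ {0}| * #|E| <= 2 #|T(E)|.  For E = A x A we have #|E| = #|A|^2 and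
   0 in Delta, which gives the bound with room to spare. *)
From Pilot Require Import Defs.
From mathcomp Require Import all_boot all_order all_algebra ring zify.
Set Implicit Arguments. Unset Strict Implicit. Unset Printing Implicit Defensive.
Import GRing.Theory.
Local Open Scope ring_scope.

Lemma card_le_twice_imset (T U : finType) (f : T -> U) (s : T -> T) (X : {set T}) :
  {in X &, forall a b, f b = f a -> b = a \/ b = s a} -> (#|X| <= 2 * #|f @: X|)%N.
Proof.
move=> fibre; have [->|[t0 t0X]] := set_0Vmem X; first by rewrite cards0.
pose g u := odflt t0 [pick t in X | f t == u].
have gP t : t \in X -> g (f t) \in X /\ f (g (f t)) = f t.
  by move=> tX; rewrite /g; case: pickP => [t' /andP[? /eqP]|/(_ t)] //=; rewrite tX eqxx.
have cover : X \subset g @: (f @: X) :|: (s \o g) @: (f @: X).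
  apply/subsetP => t tX; have [gX fg] := gP t tX.
  have ftX : f t \in f @: X by exact: imset_f.
  by apply/setUP; case: (fibre _ _ gX tX (esym fg)) => ->; [left | right]; apply: imset_f.
apply: leq_trans (subset_leq_card cover) _; apply: leq_trans (leq_card_setU _ _) _.
by rewrite mul2n -addnn leq_add ?leq_imset_card.
Qed.

Section DotProduct.
Variables (R : comPzRingType) (n : nat).

Definition dotv (u v : 'cV[R]_n) : R := (u^T *m v) 0 0.

Lemma dotv_orthogonal (th : 'M[R]_n) (u v : 'cV[R]_n) :
  th^T *m th = 1%:M -> dotv (th *m u) (th *m v) = dotv u v.
Proof. by move=> thK; rewrite /dotv trmx_mul -mulmxA (mulmxA th^T) thK mul1mx. Qed.

End DotProduct.

Section Plane.
Variable F : fieldType.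
Implicit Types (a b : F) (u v w e f : 'cV[F]_2).

Definition cV2 a b : 'cV[F]_2 := \col_(i < 2) (if i == 0%N :> nat then a else b).

Lemma cV2E0 a b : cV2 a b 0 0 = a. Proof. by rewrite mxE. Qed.
Lemma cV2E1 a b : cV2 a b 1 0 = b. Proof. by rewrite mxE. Qed.

Lemma cV2_eq u v : u 0 0 = v 0 0 -> u 1 0 = v 1 0 -> u = v.
Proof.
move=> eq0 eq1; apply/matrixP => i j; rewrite (ord1 j).
have [->|->] : i = 0 \/ i = 1 by case: i => -[|[|//]] ?; [left | right]; apply: val_inj.
  exact: eq0.
exact: eq1.
Qed.

Lemma dotv2 u v : dotv u v = u 0 0 * v 0 0 + u 1 0 * v 1 0.
Proof.
rewrite /dotv mxE big_ord_recr big_ord1 !mxE.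
by congr (u _ _ * v _ _ + u _ _ * v _ _); apply: val_inj.
Qed.

Definition crossv u v : F := u 0 0 * v 1 0 - u 1 0 * v 0 0.

Lemma lagrange_identity e f w :
  dotv e f * dotv w w - dotv e w * dotv f w = crossv e w * crossv f w.
Proof. by rewrite !dotv2 /crossv; ring. Qed.

Lemma dotv_crossv_eq0 w e :
  dotv w w != 0 -> dotv e w = 0 -> crossv e w = 0 -> e = 0.
Proof.
move=> ww_neq0 ew ex; apply: cV2_eq; rewrite mxE; apply: (mulIf ww_neq0); rewrite mul0r.
- have -> : e 0 0 * dotv w w = w 0 0 * dotv e w + w 1 0 * crossv e w.
    by rewrite !dotv2 /crossv; ring.
  by rewrite ew ex !mulr0 addr0.
- have -> : e 1 0 * dotv w w = w 1 0 * dotv e w - w 0 0 * crossv e w.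
    by rewrite !dotv2 /crossv; ring.
  by rewrite ew ex !mulr0 subr0.
Qed.

Definition mirror w u := (2 * dotv u w / dotv w w) *: w - u.

Lemma eq_dotv_mirror w u v :
  2 != 0 :> F -> dotv w w != 0 ->
  dotv v v = dotv u u -> dotv (v - w) (v - w) = dotv (u - w) (u - w) ->
  v = u \/ v = mirror w u.
Proof.
move=> two_neq0 ww_neq0 eq_vu eq_vwuw.
set c := 2 * dotv u w / dotv w w.
have cE : c * dotv w w = 2 * dotv u w by rewrite divfK.
have ew : dotv (v - u) w = 0.
  apply: (mulfI two_neq0); rewrite mulr0.
  have -> : 2 * dotv (v - u) w =
      (dotv v v - dotv u u) - (dotv (v - w) (v - w) - dotv (u - w) (u - w)).
    by rewrite !dotv2 !mxE; ring.
  by rewrite eq_vu eq_vwuw !subrr.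
have fw : dotv (v + u - c *: w) w = 0.
  have -> : dotv (v + u - c *: w) w = dotv (v - u) w + 2 * dotv u w - c * dotv w w.
    by rewrite !dotv2 !mxE; ring.
  by rewrite ew cE add0r subrr.
have ef : dotv (v - u) (v + u - c *: w) = 0.
  have -> : dotv (v - u) (v + u - c *: w) = dotv v v - dotv u u - c * dotv (v - u) w.
    by rewrite !dotv2 !mxE; ring.
  by rewrite eq_vu ew mulr0 !subrr.
(* Both v - u and v + u - c w are orthogonal to w and to each other, which in
   the plane forces one of them to vanish. *)
have := lagrange_identity (v - u) (v + u - c *: w) w.
rewrite ef ew fw !mul0r subrr => /esym/eqP; rewrite mulf_eq0 => /orP[] /eqP cross0.
  by left; apply/subr0_eq/(dotv_crossv_eq0 ww_neq0).
by right; rewrite /mirror -/c -(subr0_eq (dotv_crossv_eq0 ww_neq0 fw cross0)) addrK.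
Qed.

End Plane.

Lemma Fp_two_neq0 p : prime p -> p != 2%N -> (2 : 'F_p) != 0.
Proof. by move=> p_pr p_neq2; rewrite -(dvdn_pcharf (pchar_Fp p_pr)) dvdn_prime2. Qed.

Section Triangles.
Variable p : nat.
Implicit Types (x y z : pt p) (t s : triangle p) (E : {set pt p}).

Lemma sqdistE x y : sqdist x y = dotv (y - x) (y - x).
Proof. by rewrite /sqdist dotv2 !mxE; ring. Qed.

Lemma sqdist_isometry (th : 'M['F_p]_2) z x y :
  Defs.orthogonal th -> sqdist (z + th *m x) (z + th *m y) = sqdist x y.
Proof.
move=> /eqP thK.
by rewrite !sqdistE opprD addrACA subrr add0r -mulmxBr dotv_orthogonal.
Qed.

Definition sides t : 'F_p * 'F_p * 'F_p :=
  (sqdist t.1.1 t.1.2, sqdist t.1.1 t.2, sqdist t.1.2 t.2).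

Lemma congruent_refl t : congruent t t.
Proof.
apply/existsP; exists 1%:M; apply/existsP; exists 0.
by rewrite /Defs.orthogonal trmx1 !mul1mx !add0r !eqxx.
Qed.

Lemma congruent_sides t s : congruent t s -> sides s = sides t.
Proof.
case/existsP=> th /existsP[z /and4P[th_orth /eqP e1 /eqP e2 /eqP e3]].
by rewrite /sides -e1 -e2 -e3 !sqdist_isometry.
Qed.

Lemma card_sides_le_T22 E : (#|sides @: triangles E| <= #|T22 E|)%N.
Proof.
pose class_sides (C : {set triangle p}) := oapp sides (0, 0, 0) [pick s in C].
apply: leq_trans (leq_imset_card class_sides _); apply/subset_leq_card/subsetP.
move=> _ /imsetP[t tE ->]; apply/imsetP; exists [set s | congruent t s].
  exact: imset_f.
rewrite /class_sides; case: pickP => [s|/(_ t)]; rewrite inE ?congruent_refl //.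
by move/congruent_sides.
Qed.

Lemma zero_in_distset E x : x \in E -> 0 \in distset E.
Proof.
by move=> xE; apply/imsetP; exists (x, x); rewrite ?inE ?xE // /sqdist !subrr expr0n addr0.
Qed.

Lemma eq_sqdist_mirror x y z z' :
  (2 : 'F_p) != 0 -> sqdist x y != 0 ->
  sqdist x z' = sqdist x z -> sqdist y z' = sqdist y z ->
  z' = z \/ z' = x + mirror (y - x) (z - x).
Proof.
move=> two_neq0 xy_neq0 eq_xz eq_yz.
have [eq_z|eq_z] : z' - x = z - x \/ z' - x = mirror (y - x) (z - x).
- apply: eq_dotv_mirror => //; first by rewrite -sqdistE.
    by rewrite -!sqdistE.
  by rewrite !opprB !addrA !subrK -!sqdistE.
- by left; apply: (addIr (- x)).
- by right; rewrite -eq_z addrC subrK.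
Qed.

End Triangles.

Section DistanceCount.
Variables (p : nat) (E : {set pt p}).
Hypothesis two_neq0 : (2 : 'F_p) != 0.

Definition dist_witness d : pt p * pt p :=
  odflt (0, 0) [pick xy in setX E E | sqdist xy.1 xy.2 == d].

Lemma dist_witnessP d : d \in distset E ->
  [/\ (dist_witness d).1 \in E, (dist_witness d).2 \in E
    & sqdist (dist_witness d).1 (dist_witness d).2 = d].
Proof.
case/imsetP=> xy xyE ->; rewrite /dist_witness.
case: pickP => [[x y] /andP[/setXP[xE yE] /eqP //]|/(_ xy)].
by rewrite xyE eqxx.
Qed.

Lemma card_nonzero_distset_mul_le : (#|distset E :\ 0%R| * #|E| <= 2 * #|T22 E|)%N.
Proof.
pose tri (dz : 'F_p * pt p) := ((dist_witness dz.1).1, (dist_witness dz.1).2, dz.2).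
pose mirror_tri (dz : 'F_p * pt p) :=
  let: (x, y, z) := tri dz in (dz.1, x + mirror (y - x) (z - x)).
have fibre : {in setX (distset E :\ 0) E &, forall a b,
    sides (tri b) = sides (tri a) -> b = a \/ b = mirror_tri a}.
  move=> [d z] [d' z'] /setXP[/setD1P[d_neq0 dE] _] /setXP[/setD1P[_ d'E] _].
  have [_ _ wd] := dist_witnessP dE; have [_ _ wd'] := dist_witnessP d'E.
  rewrite /mirror_tri /tri /sides => /eqP /=; rewrite !xpair_eqE.
  case/andP=> /andP[+ /eqP eq_xz] /eqP eq_yz; rewrite wd wd' => /eqP eq_d; subst d'.
  have wd_neq0 : sqdist (dist_witness d).1 (dist_witness d).2 != 0 by rewrite wd.
  by have [->|->] := eq_sqdist_mirror two_neq0 wd_neq0 eq_xz eq_yz; [left | right].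
rewrite -cardsX; apply: leq_trans (card_le_twice_imset fibre) _.
rewrite leq_mul2l; apply/orP; right; apply: leq_trans (card_sides_le_T22 E).
apply/subset_leq_card/subsetP => _ /imsetP[[d z] /setXP[/setD1P[_ dE] zE] ->].
have [xE yE _] := dist_witnessP dE.
by apply: imset_f; rewrite inE /= xE yE zE.
Qed.

End DistanceCount.

Section Grid.
Variables (p : nat) (A : {set 'F_p}).

Lemma card_grid : #|grid A| = (#|A| ^ 2)%N.
Proof.
have -> : grid A = (fun ab => cV2 ab.1 ab.2) @: setX A A.
  apply/setP => x; rewrite [x \in grid A]inE.
  apply/andP/imsetP => [[x0A x1A]|[[a b] /setXP[aA bA] ->]].
    exists (x 0 0, x 1 0); first by rewrite inE x0A.
    by apply: cV2_eq; rewrite /= ?cV2E0 ?cV2E1.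
  by rewrite /= cV2E0 cV2E1.
rewrite card_in_imset ?cardsX ?mulnn // => -[a b] [a' b'] _ _ /= eq_ab.
by move: (congr1 (fun u : 'cV_2 => (u 0 0, u 1 0)) eq_ab); rewrite /= !cV2E0 !cV2E1.
Qed.

Lemma cV2_in_grid a b : a \in A -> b \in A -> cV2 a b \in grid A.
Proof. by move=> aA bA; rewrite inE cV2E0 cV2E1 aA bA. Qed.

Lemma nonzero_distset_grid a b : a \in A -> b \in A -> a != b ->
  sqdist (cV2 a a) (cV2 b a) \in distset (grid A) :\ 0.
Proof.
move=> aA bA ab; rewrite !inE; apply/andP; split.
  by rewrite /sqdist !cV2E0 !cV2E1 subrr expr0n addr0 sqrf_eq0 subr_eq0.
by apply/imsetP; exists (cV2 a a, cV2 b a); rewrite // inE /= !cV2_in_grid.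
Qed.

End Grid.

Theorem lemma2p5 (p : nat) (hp : prime p) (hodd : p != 2%N) (A : {set 'F_p}) :
  (((#|A| ^ 2)%N)%:Z - 2) * (#|distset (grid A)|)%:Z <= 6 * (#|T22 (grid A)|)%:Z.
Proof.
have [A_le1|/card_gt1P[a [b [aA bA ab]]]] := leqP #|A| 1.
  have A2_le1 : (#|A| ^ 2 <= 1)%N by rewrite -(exp1n 2) leq_exp2r.
  nia.
have card_distset : #|distset (grid A)| = #|distset (grid A) :\ 0|.+1.
  by rewrite (cardsD1 0) (zero_in_distset (cV2_in_grid aA aA)).
have nonzero_dist : (0 < #|distset (grid A) :\ 0%R|)%N.
  by apply/card_gt0P; exists (sqdist (cV2 a a) (cV2 b a)); apply: nonzero_distset_grid.
have := card_nonzero_distset_mul_le (grid A) (Fp_two_neq0 hp hodd).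
rewrite card_grid card_distset; nia.
Qed.
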